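(* Let $\operatorname{char}(k)\ne2$, $r\ge2$, $m\ge2$, $a_1,\dots,a_{r+1},b_1,\dots,b_m\in X$, $\mu=[a_{r+1},\dots,a_1]_R$, $\nu=[b_m,\dots,b_1]_R$. For all $i,j$ with $2\le i\le r+1$ and $2\le j\le m$, $$(\mu\circ\nu)\sim(-1)^{|a_i||a_{i-1}\cdots a_1b_m\cdots b_j|+|b_j||a_{i-1}\cdots a_1b_m\cdots b_{j+1}|}\,(\mu_{a_i\mapsto b_j}\circ\nu_{b_j\mapsto a_i}),$$ where $\mu_{a_i\mapsto b_j}$ is obtained from $\mu$ by replacing the letter $a_i$ (in position $i$) by $b_j$, and $\nu_{b_j\mapsto a_i}$ is obtained from $\nu$ by replacing $b_j$ (in position $j$) by $a_i$. In particular, if $r=m$, $a_1=b_1$ and $a_1\in X_1$, then $(\mu\circ\nu)\sim-(\mu\circ\nu)$, and consequently $(\mu\circ\nu)$ equals in $\mathrm{GDN}_s(X)$ a linear combination of terms of length $\ell(\mu)+\ell(\nu)$ and root number $>r(\mu)+r(\nu)=2$.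
   Context: A GDN superalgebra is a superalgebra $\mathcal A=\mathcal A_0\oplus\mathcal A_1$ over a field $k$ (product $\circ$, $\mathcal A_i\circ\mathcal A_j\subseteq\mathcal A_{i+j}$ mod 2, $|x|=i$ for nonzero $x\in\mathcal A_i$) satisfying for homogeneous $x,y,z$: $x\circ(y\circ z)-(x\circ y)\circ z=(-1)^{|x||y|}(y\circ(x\circ z)-(y\circ x)\circ z)$ and $(x\circ y)\circ z=(-1)^{|y||z|}(x\circ z)\circ y$. $X=X_0\sqcup X_1$ is well-ordered, elements of $X_i$ have parity $i$, and $\mathrm{GDN}_s(X)$ is the free GDN superalgebra on $X$. Terms over $X$: letters of $X$ and products $(\mu\circ\nu)$ of terms, regarded as elements of $\mathrm{GDN}_s(X)$; length $\ell$ is the number of letters. $[\mu_1,\dots,\mu_n]_R=(\mu_1\circ(\cdots\circ(\mu_{n-1}\circ\mu_n)\cdots))$. Root number: $r(a)=0$ ($a\in X$), $r((\mu\circ\nu))=r(\mu)+1$ if $\nu\in X$, else $r(\mu)+r(\nu)$. For a string $a_1\cdots a_n$ of letters, $|a_1\cdots a_n|=|a_1|+\dots+|a_n|\pmod 2$, and the empty string has parity $0$. For terms $\mu,\nu$ with $r(\mu)=r(\nu)$, $\ell(\mu)=\ell(\nu)$ and nonzero $\alpha,\beta\in k$, write $\alpha\mu\sim\beta\nu$ if $\alpha\mu-\beta\nu=\sum_i\alpha_i\mu_i$ in $\mathrm{GDN}_s(X)$ for some $\alpha_i\in k$ and terms $\mu_i$ with $\ell(\mu_i)=\ell(\mu)$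 and $r(\mu_i)>r(\mu)$. *)

From HB Require Import structures.
From mathcomp Require Import all_boot all_order all_algebra.
Set Implicit Arguments. Unset Strict Implicit. Unset Printing Implicit Defensive.
Import Order.TTheory GRing.Theory Num.Theory.
Local Open Scope ring_scope.

Inductive term (X : Type) : Type :=
| Let : X -> term X
| Mul : term X -> term X -> term X.
Arguments Let {X} _.
Arguments Mul {X} _ _.

Section TermEq.
Variable X : eqType.
Fixpoint term_eqb (s t : term X) : bool :=
  match s, t with
  | Let x, Let y => x == y
  | Mul s1 s2, Mul t1 t2 => term_eqb s1 t1 && term_eqb s2 t2
  | _, _ => false
  end.
Lemma term_eqP : Equality.axiom term_eqb.
Proof.
elim=> [x|s1 IH1 s2 IH2] [y|t1 t2] /=; try by constructor.
- by apply: (iffP eqP) => [->|[]].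
- case: (IH1 t1) => [->|N1] /=; last by constructor; case.
  case: (IH2 t2) => [->|N2] /=; first by constructor.
  by constructor; case.
Qed.
HB.instance Definition _ := hasDecEq.Build (term X) term_eqP.
End TermEq.

Section GDN.
Variable k : fieldType.
Variable X : eqType.
(* parity of letters: par x = true iff x \in X_1 *)
Variable par : X -> bool.

Fixpoint tlen (t : term X) : nat :=
  match t with Let _ => 1%N | Mul u v => (tlen u + tlen v)%N end.

Fixpoint root_num (t : term X) : nat :=
  match t with
  | Let _ => 0%N
  | Mul u (Let _) => (root_num u).+1
  | Mul u v => (root_num u + root_num v)%N
  end.

Fixpoint tpar (t : term X) : bool :=
  match t with Let x => par x | Mul u v => tpar u (+) tpar v end.

Definition sgn (b : bool) : k := (-1) ^+ b.

(* formal linear combinations of terms: elements of the free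
   nonassociative superalgebra on X over k *)
Definition lc := seq (k * term X).

Definition coef (s : lc) (u : term X) : k := \sum_(p <- s | p.2 == u) p.1.
Definition lc_scale (a : k) (s : lc) : lc := [seq (a * p.1, p.2) | p <- s].
Definition lc_mull (t : term X) (s : lc) : lc := [seq (p.1, Mul t p.2) | p <- s].
Definition lc_mulr (s : lc) (t : term X) : lc := [seq (p.1, Mul p.2 t) | p <- s].

(* The (two-sided) ideal of the free nonassociative superalgebra generated by
   the GDN super-identities; gdn_zero s means that s is 0 in GDN_s(X). *)
Inductive gdn_zero : lc -> Prop :=
| gdn_nil : gdn_zero [::]
| gdn_rel1 (x y z : term X) :
    gdn_zero [:: (1, Mul x (Mul y z)); (-1, Mul (Mul x y) z);
                 (- sgn (tpar x && tpar y), Mul y (Mul x z));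
                 (sgn (tpar x && tpar y), Mul (Mul y x) z)]
| gdn_rel2 (x y z : term X) :
    gdn_zero [:: (1, Mul (Mul x y) z); (- sgn (tpar y && tpar z), Mul (Mul x z) y)]
| gdn_add (s t : lc) : gdn_zero s -> gdn_zero t -> gdn_zero (s ++ t)
| gdn_scale (a : k) (s : lc) : gdn_zero s -> gdn_zero (lc_scale a s)
| gdn_mull (t : term X) (s : lc) : gdn_zero s -> gdn_zero (lc_mull t s)
| gdn_mulr (t : term X) (s : lc) : gdn_zero s -> gdn_zero (lc_mulr s t)
| gdn_ext (s s' : lc) : gdn_zero s -> (forall u, coef s u = coef s' u) -> gdn_zero s'.

Definition gdn_sim (alpha : k) (mu : term X) (beta : k) (nu : term X) : Prop :=
  [/\ root_num mu = root_num nu, tlen mu = tlen nu, alpha != 0, beta != 0 &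
   exists s : lc,
     (forall p, p \in s -> tlen p.2 = tlen mu /\ (root_num mu < root_num p.2)%N) /\
     gdn_zero ([:: (alpha, mu); (- beta, nu)] ++ [seq (- p.1, p.2) | p <- s])].

(* right-normed term [a_n, ..., a_1]_R for a : nat -> X, n >= 1 *)
Fixpoint rnorm (a : nat -> X) (n : nat) : term X :=
  match n with
  | 0 => Let (a 0%N) (* unused *)
  | 1 => Let (a 1%N)
  | n'.+1 => Mul (Let (a n)) (rnorm a n')
  end.

(* parity of the string a_{hi-1} ... a_lo  (indices lo <= l < hi) *)
Definition spar (a : nat -> X) (lo hi : nat) : bool :=
  \big[addb/false]_(lo <= l < hi) par (a l).

Definition repl (a : nat -> X) (i : nat) (x : X) : nat -> X :=
  fun l => if l == i then x else a l.

End GDN.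

From HB Require Import structures.
From mathcomp Require Import all_boot all_order all_algebra.
From mathcomp Require Import ring zify.
Import Order.TTheory GRing.Theory Num.Theory.
Local Open Scope ring_scope.
Set Implicit Arguments. Unset Strict Implicit. Unset Printing Implicit Defensive.

(* The left-symmetry identity of a GDN superalgebra exchanges [x (y z)] and [y (x z)] up to
   sign and up to the terms [(x y) z], [(y x) z], whose root number is larger.  Hence a letter
   [a_i] (i >= 2) of a right-normed word can be pulled to the front,
   [[a_n, ..., a_1]_R ~ +- a_i [a_n, ..., ^a_i, ..., a_1]_R], modulo terms of larger root number.
   Pulling [a_i] and [b_j] to the fronts of [mu] and [nu], two applications of the right
   commutativity [(x y) z = +- (x z) y] around one more exchange swap the two front letters,
   and pulling them back gives the first claim.  For the second, right commutativity gives
   [(a_(r+1) mu') nu ~ +- (a_(r+1) nu) mu'], and swapping the letters in positions 2, ..., r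
   one by one leads back to [mu nu]; as [a_1 = b_1] is odd the total sign is [-1], so
   [2 (mu nu)] is a combination of higher terms and [char k <> 2] concludes. *)

Section CongruenceModuloHigherTerms.
Variables (k : fieldType) (X : eqType) (par : X -> bool).
Local Notation term := (term X).
Local Notation lc := (lc k X).

Lemma coef_nil u : coef ([::] : lc) u = 0.
Proof. by rewrite /coef big_nil. Qed.

Lemma coef_cons (p : k * term) (s : lc) u :
  coef (p :: s) u = (p.2 == u)%:R * p.1 + coef s u.
Proof. by rewrite /coef big_cons; case: eqP; rewrite ?mul1r ?mul0r ?add0r. Qed.

Lemma coef_cat (s t : lc) u : coef (s ++ t) u = coef s u + coef t u.
Proof. exact: big_cat. Qed.

Lemma coef_scale a (s : lc) u : coef (lc_scale a s) u = a * coef s u.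
Proof. by rewrite /coef big_map mulr_sumr. Qed.

Lemma coef_opp (s : lc) u : coef [seq (- p.1, p.2) | p <- s] u = - coef s u.
Proof. by rewrite /coef big_map sumrN. Qed.

Definition root_rt (t : term) : nat := if t is Let _ then 1 else root_num t.

Lemma root_numM u v : root_num (Mul u v) = (root_num u + root_rt v)%N.
Proof. by case: v => [x|v1 v2] //=; rewrite addn1. Qed.

Lemma root_rt_LetM x t : root_rt (Mul (Let x) t) = root_rt t.
Proof. by case: t. Qed.

Lemma root_num_le_rt t : (root_num t <= root_rt t)%N.
Proof. by case: t. Qed.

Definition higher_terms (n L : nat) (h : lc) :=
  forall p, p \in h -> tlen p.2 = L /\ (n < root_num p.2)%N.

Definition zero_mod (n L : nat) (s : lc) :=
  exists2 h, higher_terms n L h & gdn_zero par (s ++ h).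

Lemma zero_mod_gdn n L s : gdn_zero par s -> zero_mod n L s.
Proof. by exists [::]; rewrite ?cats0. Qed.

Lemma zero_mod_ext n L s s' : zero_mod n L s -> coef s =1 coef s' -> zero_mod n L s'.
Proof.
move=> [h Hh Z] Hc; exists h => //.
by apply: gdn_ext Z _ => u; rewrite !coef_cat Hc.
Qed.

Lemma zero_mod_cat n L s t : zero_mod n L s -> zero_mod n L t -> zero_mod n L (s ++ t).
Proof.
move=> [h1 H1 Z1] [h2 H2 Z2]; exists (h1 ++ h2).
  by move=> p; rewrite mem_cat => /orP [] ?; [apply: H1 | apply: H2].
by apply: gdn_ext (gdn_add Z1 Z2) _ => u; rewrite !coef_cat; ring.
Qed.

Lemma zero_mod_scale n L a s : zero_mod n L s -> zero_mod n L (lc_scale a s).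
Proof.
move=> [h H Z]; exists (lc_scale a h); first by move=> p /mapP [q /H Hq ->].
by have := gdn_scale a Z; rewrite /lc_scale map_cat.
Qed.

Lemma zero_mod_mulr n L s t :
  zero_mod n L s -> zero_mod (n + root_rt t) (L + tlen t) (lc_mulr s t).
Proof.
move=> [h H Z]; exists (lc_mulr h t).
  move=> p /mapP [q /H [Hl Hr] ->].
  by rewrite root_numM /= Hl ltn_add2r.
by have := gdn_mulr t Z; rewrite /lc_mulr map_cat.
Qed.

Lemma zero_mod_mull n L s t :
  zero_mod n L s -> zero_mod (root_num t + n) (tlen t + L) (lc_mull t s).
Proof.
move=> [h H Z]; exists (lc_mull t h).
  move=> p /mapP [q /H [Hl Hr] ->].
  by rewrite root_numM /= Hl ltn_add2l (leq_trans Hr (root_num_le_rt _)).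
by have := gdn_mull t Z; rewrite /lc_mull map_cat.
Qed.

Definition sim_mod n L (e : bool) (T T' : term) :=
  zero_mod n L [:: (1, T); (- sgn k e, T')].

Lemma sim_mod_refl n L T : sim_mod n L false T T.
Proof.
rewrite /sim_mod; apply: zero_mod_ext (zero_mod_gdn n L (gdn_nil k par)) _ => u.
by rewrite coef_nil !coef_cons coef_nil /sgn expr0 /=; ring.
Qed.

Lemma sim_mod_trans n L e1 e2 T1 T2 T3 :
  sim_mod n L e1 T1 T2 -> sim_mod n L e2 T2 T3 -> sim_mod n L (e1 (+) e2) T1 T3.
Proof.
move=> H1 /(zero_mod_scale (sgn k e1)) H2; rewrite /sim_mod.
apply: zero_mod_ext (zero_mod_cat H1 H2) _ => u.
by rewrite coef_cat coef_scale !coef_cons !coef_nil /= /sgn signr_addb; ring.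
Qed.

Lemma sim_mod_sym n L e T T' : sim_mod n L e T T' -> sim_mod n L e T' T.
Proof.
move/(zero_mod_scale (- sgn k e)) => H; rewrite /sim_mod; apply: zero_mod_ext H _ => u.
rewrite coef_scale !coef_cons !coef_nil /= /sgn.
have sq : (-1) ^+ e * (-1) ^+ e = 1 :> k by rewrite -signr_addb addbb.
transitivity ((T' == u)%:R * ((-1) ^+ e * (-1) ^+ e) - (-1) ^+ e * (T == u)%:R :> k).
  by ring.
by rewrite sq; ring.
Qed.

Lemma sim_mod_mulr n L e T T' t n' L' : sim_mod n L e T T' ->
  n' = (n + root_rt t)%N -> L' = (L + tlen t)%N -> sim_mod n' L' e (Mul T t) (Mul T' t).
Proof. by move=> /(zero_mod_mulr t) H -> ->. Qed.

Lemma sim_mod_mull n L e T T' t n' L' : sim_mod n L e T T' ->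
  n' = (root_num t + n)%N -> L' = (tlen t + L)%N -> sim_mod n' L' e (Mul t T) (Mul t T').
Proof. by move=> /(zero_mod_mull t) H -> ->. Qed.

Lemma sim_mod_rel2 n L (x y z : term) :
  sim_mod n L (tpar par y && tpar par z) (Mul (Mul x y) z) (Mul (Mul x z) y).
Proof. exact/zero_mod_gdn/gdn_rel2. Qed.

(* The two terms [(x y) z] and [(y x) z] of the left-symmetry identity are higher ones. *)
Lemma sim_mod_exchange (x y : X) (z : term) :
  sim_mod (root_rt z) (tlen z).+2 (par x && par y)
    (Mul (Let x) (Mul (Let y) z)) (Mul (Let y) (Mul (Let x) z)).
Proof.
exists [:: (-1, Mul (Mul (Let x) (Let y)) z);
           (sgn k (par x && par y), Mul (Mul (Let y) (Let x)) z)].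
  by move=> p; rewrite !inE => /orP [] /eqP ->; split; rewrite ?root_numM /= ?addnA.
apply: (gdn_ext (gdn_rel1 k par (Let x) (Let y) z)) => u.
by rewrite !coef_cons !coef_nil /=; ring.
Qed.

End CongruenceModuloHigherTerms.

Section RightNormedWords.
Variables (X : eqType) (par : X -> bool).
Implicit Types a b : nat -> X.

Definition drop_at a i l := if (l < i)%N then a l else a l.+1.

Definition graft q a b l := if (2 <= l <= q)%N then b l else a l.

Lemma rnormS a n : (0 < n)%N -> rnorm a n.+1 = Mul (Let (a n.+1)) (rnorm a n).
Proof. by case: n. Qed.

Lemma eq_rnorm a a' n : (0 < n)%N -> (forall l, (0 < l <= n)%N -> a l = a' l) ->
  rnorm a n = rnorm a' n.
Proof.
elim: n => [|[|n] IH] // _ H; first by rewrite /= H.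
rewrite (rnormS a) // (rnormS a') // H ?leqnn // (IH isT) // => l /andP [l0 ln].
by rewrite H // l0 ltnW.
Qed.

Lemma rnorm_ext a a' n : a =1 a' -> rnorm a n = rnorm a' n.
Proof.
move=> H; case: n => [|n]; first by rewrite /= H.
elim: n => [|n IH]; first by rewrite /= H.
by rewrite (rnormS (n := n.+1) a) // (rnormS (n := n.+1) a') // H IH.
Qed.

Lemma tlen_rnorm a n : (0 < n)%N -> tlen (rnorm a n) = n.
Proof. by case: n => // n _; elim: n => // n IH; rewrite (rnormS a) //= IH. Qed.

Lemma root_rt_rnorm a n : (0 < n)%N -> root_rt (rnorm a n) = 1%N.
Proof.
by case: n => // n _; elim: n => // n IH; rewrite (rnormS a) // root_rt_LetM.
Qed.

Lemma root_num_rnorm a n : (1 < n)%N -> root_num (rnorm a n) = 1%N.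
Proof. by case: n => [|[|n]] // _; rewrite rnormS // root_numM root_rt_rnorm. Qed.

Lemma eq_spar a a' lo hi : (forall l, (lo <= l < hi)%N -> a l = a' l) ->
  spar par a lo hi = spar par a' lo hi.
Proof. by move=> H; apply: eq_big_nat => l /H ->. Qed.

Lemma spar_empty a lo : spar par a lo lo = false.
Proof. by rewrite /spar big_geq. Qed.

Lemma spar_recl a lo hi : (lo < hi)%N -> spar par a lo hi = par (a lo) (+) spar par a lo.+1 hi.
Proof. by move=> H; rewrite /spar big_ltn. Qed.

Lemma spar_recr a lo hi : (lo <= hi)%N -> spar par a lo hi.+1 = spar par a lo hi (+) par (a hi).
Proof. by move=> H; rewrite /spar big_nat_recr. Qed.

Lemma spar_cat a lo mid hi : (lo <= mid <= hi)%N ->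
  spar par a lo hi = spar par a lo mid (+) spar par a mid hi.
Proof. by case/andP=> H1 H2; rewrite /spar (big_cat_nat H1 H2). Qed.

Lemma tpar_rnorm a n : (0 < n)%N -> tpar par (rnorm a n) = spar par a 1 n.+1.
Proof.
case: n => // n _; elim: n => [|n IH]; first by rewrite spar_recl // spar_empty addbF.
by rewrite (rnormS a) //= IH [RHS]spar_recr // addbC.
Qed.

Lemma spar_drop_at a i n : (1 <= i <= n)%N ->
  spar par (drop_at a i) 1 n = spar par a 1 i (+) spar par a i.+1 n.+1.
Proof.
move=> Hi; rewrite (spar_cat _ Hi); congr addb.
  by apply: eq_spar => l /andP [_ Hl]; rewrite /drop_at Hl.
rewrite /spar big_add1 /=; apply: eq_big_nat => l /andP [Hl _].
by rewrite /drop_at ltnNge Hl.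
Qed.

Lemma drop_at_repl a i x : drop_at (repl a i x) i =1 drop_at a i.
Proof.
move=> l; rewrite /drop_at /repl; case: ltnP => H; first by rewrite ltn_eqF.
by rewrite gtn_eqF // ltnS.
Qed.

Lemma graft1 a b : graft 1 a b =1 a.
Proof. by case=> [|[|l]]. Qed.

Lemma repl_graft q a b : (0 < q)%N -> repl (graft q a b) q.+1 (b q.+1) =1 graft q.+1 a b.
Proof.
move=> q0 l; rewrite /repl /graft; case: eqVneq => [->|ne]; first by rewrite ltnS q0 leqnn.
by rewrite [(l <= q.+1)%N]leq_eqVlt (negbTE ne) ltnS.
Qed.

End RightNormedWords.

Section LetterExchange.
Variables (k : fieldType) (X : eqType) (par : X -> bool).
Implicit Types a b : nat -> X.
Local Notation sim_mod := (sim_mod k par).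

Lemma sim_mod_pull a n i : (2 <= i <= n)%N ->
  sim_mod 1 n (par (a i) && spar par a i.+1 n.+1) (rnorm a n)
    (Mul (Let (a i)) (rnorm (drop_at a i) n.-1)).
Proof.
elim: n i => [|n IH] i /andP [i2 iSn]; first by case: i i2 iSn.
case: n IH iSn => [|n] IH iSn; first by case: i i2 iSn => [|[]].
have [->|ne] := eqVneq i n.+2.
  rewrite spar_empty andbF rnormS // (@eq_rnorm _ (drop_at a n.+2) a) //.
    exact: sim_mod_refl.
  by move=> l /andP [_ ln]; rewrite /drop_at ltnS ln.
have iSn' : (i <= n.+1)%N by rewrite -ltnS ltn_neqAle ne.
have n0 : (0 < n)%N by lia.
have /IH Hpull : (2 <= i <= n.+1)%N by rewrite i2.
have {}Hpull := sim_mod_mull (t := Let (a n.+2)) Hpull erefl erefl.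
have Hexch := sim_mod_exchange k par (a n.+2) (a i) (rnorm (drop_at a i) n).
rewrite root_rt_rnorm // tlen_rnorm // in Hexch.
have := sim_mod_trans Hpull Hexch.
rewrite [n.+2.-1]/= (rnormS (n := n.+1) a) // (rnormS (drop_at a i)) //.
have -> : drop_at a i n.+1 = a n.+2 by rewrite /drop_at ltnNge iSn'.
suff -> : par (a i) && spar par a i.+1 n.+3
          = par (a i) && spar par a i.+1 n.+2 (+) par (a n.+2) && par (a i) by apply.
by rewrite spar_recr ?ltnS //; case: (par (a i)); rewrite /= ?andbT ?andbF.
Qed.

Lemma sim_mod_exchange_heads (x y : X) (u v : term X) :
  sim_mod (root_rt u + root_rt v) (tlen u + tlen v).+2
    ((par x && par y) (+) (tpar par u && (par x (+) par y)))
    (Mul (Mul (Let x) u) (Mul (Let y) v)) (Mul (Mul (Let y) u) (Mul (Let x) v)).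
Proof.
have H1 := sim_mod_rel2 k par (root_rt u + root_rt v) (tlen u + tlen v).+2
  (Let x) u (Mul (Let y) v).
have H2 : sim_mod (root_rt u + root_rt v) (tlen u + tlen v).+2 (par x && par y)
    (Mul (Mul (Let x) (Mul (Let y) v)) u) (Mul (Mul (Let y) (Mul (Let x) v)) u).
  by apply: sim_mod_mulr (sim_mod_exchange k par x y v) _ _; lia.
have H3 := sim_mod_sym (sim_mod_rel2 k par (root_rt u + root_rt v) (tlen u + tlen v).+2
  (Let y) u (Mul (Let x) v)).
suff -> : (par x && par y) (+) (tpar par u && (par x (+) par y)) =
  tpar par u && (par y (+) tpar par v) (+) par x && par y (+) tpar par u && (par x (+) tpar par v).
  exact: sim_mod_trans (sim_mod_trans H1 H2) H3.
by case: (par x); case: (par y); case: (tpar par u); case: (tpar par v).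
Qed.

Lemma sim_mod_pull_repl a n i x : (2 <= i <= n)%N ->
  sim_mod 1 n (par x && spar par a i.+1 n.+1) (rnorm (repl a i x) n)
    (Mul (Let x) (rnorm (drop_at a i) n.-1)).
Proof.
move=> Hi; have := sim_mod_pull (repl a i x) Hi.
have -> : repl a i x i = x by rewrite /repl eqxx.
have -> : spar par (repl a i x) i.+1 n.+1 = spar par a i.+1 n.+1.
  by apply: eq_spar => l /andP [il _]; rewrite /repl gtn_eqF.
by rewrite (rnorm_ext _ (drop_at_repl a i x)).
Qed.

Lemma sim_mod_swap a b n m i j : (2 <= i <= n)%N -> (2 <= j <= m)%N ->
  sim_mod 2 (n + m)
    ((par (a i) && par (b j)) (+)
     ((par (a i) (+) par (b j)) && (spar par a 1 i (+) spar par b j.+1 m.+1)))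
    (Mul (rnorm a n) (rnorm b m))
    (Mul (rnorm (repl a i (b j)) n) (rnorm (repl b j (a i)) m)).
Proof.
move=> Hi Hj; have n1 : (0 < n.-1)%N by lia. have m1 : (0 < m.-1)%N by lia.
set A := a i; set B := b j.
set mu1 := rnorm (drop_at a i) n.-1; set nu1 := rnorm (drop_at b j) m.-1.
have S1 : sim_mod 2 (n + m) (par A && spar par a i.+1 n.+1)
    (Mul (rnorm a n) (rnorm b m)) (Mul (Mul (Let A) mu1) (rnorm b m)).
  by apply: sim_mod_mulr (sim_mod_pull a Hi) _ _; rewrite ?root_rt_rnorm ?tlen_rnorm //; lia.
have S2 : sim_mod 2 (n + m) (par B && spar par b j.+1 m.+1)
    (Mul (Mul (Let A) mu1) (rnorm b m)) (Mul (Mul (Let A) mu1) (Mul (Let B) nu1)).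
  by apply: sim_mod_mull (sim_mod_pull b Hj) _ _;
    rewrite ?root_numM ?root_rt_rnorm //= ?tlen_rnorm //; lia.
have S3 : sim_mod 2 (n + m) ((par A && par B) (+) (tpar par mu1 && (par A (+) par B)))
    (Mul (Mul (Let A) mu1) (Mul (Let B) nu1)) (Mul (Mul (Let B) mu1) (Mul (Let A) nu1)).
  have := sim_mod_exchange_heads A B mu1 nu1.
  by rewrite !root_rt_rnorm // !tlen_rnorm // -addSn -addnS !prednK //; lia.
have S4 : sim_mod 2 (n + m) (par B && spar par a i.+1 n.+1)
    (Mul (Mul (Let B) mu1) (Mul (Let A) nu1)) (Mul (rnorm (repl a i B) n) (Mul (Let A) nu1)).
  apply: sim_mod_sym; apply: sim_mod_mulr (sim_mod_pull_repl a B Hi) _ _.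
    by rewrite root_rt_LetM root_rt_rnorm.
  by rewrite /= tlen_rnorm //; lia.
have S5 : sim_mod 2 (n + m) (par A && spar par b j.+1 m.+1)
    (Mul (rnorm (repl a i B) n) (Mul (Let A) nu1))
    (Mul (rnorm (repl a i B) n) (rnorm (repl b j A) m)).
  apply: sim_mod_sym; apply: sim_mod_mull (sim_mod_pull_repl b A Hj) _ _;
    rewrite ?root_num_rnorm ?tlen_rnorm //; lia.
have Emu1 : tpar par mu1 = spar par a 1 i (+) spar par a i.+1 n.+1.
  by rewrite tpar_rnorm // prednK ?spar_drop_at //; lia.
suff -> : (par A && par B) (+) ((par A (+) par B) && (spar par a 1 i (+) spar par b j.+1 m.+1))
  = par A && spar par a i.+1 n.+1 (+) par B && spar par b j.+1 m.+1
    (+) ((par A && par B) (+) (tpar par mu1 && (par A (+) par B)))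
    (+) par B && spar par a i.+1 n.+1 (+) par A && spar par b j.+1 m.+1.
  exact: sim_mod_trans (sim_mod_trans (sim_mod_trans (sim_mod_trans S1 S2) S3) S4) S5.
rewrite Emu1.
by case: (par A); case: (par B); case: (spar par a 1 i); case: (spar par a i.+1 n.+1);
   case: (spar par b j.+1 m.+1).
Qed.

Lemma sim_mod_swap_prefix a b n m q : (0 < q <= minn n m)%N ->
  sim_mod 2 (n + m)
    (((par (a 1) (+) spar par b 2 m.+1) && (spar par a 2 q.+1 (+) spar par b 2 q.+1))
       (+) spar par b 2 q.+1)
    (Mul (rnorm a n) (rnorm b m)) (Mul (rnorm (graft q a b) n) (rnorm (graft q b a) m)).
Proof.
elim: q => [|[|q] IH] // /andP [_ qnm].
  by rewrite !spar_empty andbF !(rnorm_ext _ (graft1 _ _)); apply: sim_mod_refl.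
have q2n : (2 <= q.+2 <= n)%N by lia.
have q2m : (2 <= q.+2 <= m)%N by lia.
have := sim_mod_trans (IH (ltnW qnm)) (sim_mod_swap (graft q.+1 a b) (graft q.+1 b a) q2n q2m).
have -> : graft q.+1 a b q.+2 = a q.+2 by rewrite /graft ltnn andbF.
have -> : graft q.+1 b a q.+2 = b q.+2 by rewrite /graft ltnn andbF.
rewrite !(rnorm_ext _ (repl_graft _ _ _)) //.
have -> : spar par (graft q.+1 a b) 1 q.+2 = par (a 1) (+) spar par b 2 q.+2.
  rewrite spar_recl //; congr addb.
  by apply: eq_spar => l /andP [l2 lq]; rewrite /graft l2 -ltnS lq.
have -> : spar par (graft q.+1 b a) q.+3 m.+1 = spar par b q.+3 m.+1.
  by apply: eq_spar => l /andP [lq _]; rewrite /graft ifN //; lia.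
rewrite (spar_cat par b (mid := q.+3)); last by lia.
rewrite (spar_recr par a (hi := q.+2)) // (spar_recr par b (hi := q.+2)) //.
by case: (par (a 1)); case: (spar par b 2 q.+2); case: (par (b q.+2));
   case: (spar par b q.+3 m.+1); case: (spar par a 2 q.+2); case: (par (a q.+2)).
Qed.

Lemma sim_mod_anti a b r : (0 < r)%N -> a 1 = b 1 -> par (a 1) ->
  sim_mod 2 (r.+1 + r) true (Mul (rnorm a r.+1) (rnorm b r)) (Mul (rnorm a r.+1) (rnorm b r)).
Proof.
move=> r0 ab1 odd1; set a' := repl b r.+1 (a r.+1).
have Ea' : rnorm a' r.+1 = Mul (Let (a r.+1)) (rnorm b r).
  rewrite rnormS // {1}/a' /repl eqxx (@eq_rnorm _ _ b) // => l /andP [_ lr].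
  by rewrite /a' /repl ifN //; lia.
have Ga : rnorm (graft r a' a) r.+1 = rnorm a r.+1.
  apply: eq_rnorm => // l /andP [l0 lr]; rewrite /graft /a' /repl.
  case: ifP => // Hl; case: eqVneq => [-> // | ne].
  by have -> : l = 1%N by lia.
have Gb : rnorm (graft r a a') r = rnorm b r.
  apply: eq_rnorm => // l /andP [l0 lr]; rewrite /graft /a' /repl.
  case: ifP => Hl; first by rewrite ifN //; lia.
  by have -> : l = 1%N by lia.
have R := sim_mod_rel2 k par 2 (r.+1 + r) (Let (a r.+1)) (rnorm a r) (rnorm b r).
rewrite -rnormS // -Ea' in R.
have P := sim_mod_swap_prefix a' a (q := r) (n := r.+1) (m := r).
rewrite Ga Gb in P.
have := sim_mod_trans R (P _); rewrite minnE subSnn subn1 r0 leqnn.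
have -> : a' 1 = a 1 by rewrite /a' /repl ifN //; lia.
have -> : spar par a' 2 r.+1 = spar par b 2 r.+1.
  by apply: eq_spar => l /andP [_ lr]; rewrite /a' /repl ifN //; lia.
rewrite !tpar_rnorm // (spar_recl par a) // (spar_recl par b) // -ab1 odd1.
by case: (spar par a 2 r.+1); case: (spar par b 2 r.+1); apply.
Qed.

Lemma gdn_sim_of_sim_mod e T T' : sim_mod (root_num T) (tlen T) e T T' ->
  root_num T' = root_num T -> tlen T' = tlen T -> gdn_sim par 1 T (sgn k e) T'.
Proof.
move=> [h Hh Z] rT lT; split; rewrite ?oner_neq0 /sgn ?signr_eq0 //.
exists [seq (- p.1, p.2) | p <- h]; split; first by move=> p /mapP [q /Hh Hq ->].
by apply: gdn_ext Z _ => u; rewrite !coef_cat !coef_opp opprK.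
Qed.

Lemma sim_mod_opp_self n L T : (2%:R : k) != 0 -> sim_mod n L true T T ->
  exists2 s : lc k X, higher_terms n L s &
    gdn_zero par ((1, T) :: [seq (- p.1, p.2) | p <- s]).
Proof.
move=> two [h Hh Z]; exists (lc_scale (- 2%:R^-1) h).
  by move=> p /mapP [q /Hh Hq ->].
apply: gdn_ext (gdn_scale 2%:R^-1 Z) _ => u.
rewrite coef_scale coef_cat !coef_cons coef_nil coef_opp coef_scale /= /sgn expr1.
by field.
Qed.

End LetterExchange.

Theorem lemma2p9 (k : fieldType) (X : eqType) (par : X -> bool)
    (hchar : (2%:R : k) != 0) (r m : nat) (hr : (2 <= r)%N) (hm : (2 <= m)%N)
    (a b : nat -> X) :
  let mu := rnorm a r.+1 in
  let nu := rnorm b m in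
  (forall i j, (2 <= i <= r.+1)%N -> (2 <= j <= m)%N ->
     gdn_sim (k:=k) par 1 (Mul mu nu)
       (sgn k ((par (a i) && (spar par a 1 i (+) spar par b j m.+1))
               (+) (par (b j) && (spar par a 1 i (+) spar par b j.+1 m.+1))))
       (Mul (rnorm (repl a i (b j)) r.+1) (rnorm (repl b j (a i)) m)))
  /\
  (r = m -> a 1%N = b 1%N -> par (a 1%N) ->
     gdn_sim (k:=k) par 1 (Mul mu nu) (-1) (Mul mu nu)
     /\ exists s : lc k X,
          (forall p, p \in s -> tlen p.2 = (tlen mu + tlen nu)%N /\
                                (root_num mu + root_num nu < root_num p.2)%N)
          /\ gdn_zero (k:=k) par ((1, Mul mu nu) :: [seq (- p.1, p.2) | p <- s])).
Proof.
have rootMM (a' b' : nat -> X) : root_num (Mul (rnorm a' r.+1) (rnorm b' m)) = 2%N.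
  by rewrite root_numM root_num_rnorm ?root_rt_rnorm //; lia.
have tlenMM (a' b' : nat -> X) : tlen (Mul (rnorm a' r.+1) (rnorm b' m)) = (r.+1 + m)%N.
  by rewrite -[tlen _]/(tlen (rnorm a' r.+1) + tlen (rnorm b' m))%N !tlen_rnorm //; lia.
move=> mu nu; split=> [i j Hi Hj | rm ab1 odd1].
  apply: gdn_sim_of_sim_mod; rewrite ?rootMM ?tlenMM //.
  rewrite (spar_recl par b (lo := j)); last by lia.
  set A := par (a i); set B := par (b j).
  set p := spar par a 1 i; set q := spar par b j.+1 m.+1.
  have -> : (A && (p (+) (B (+) q))) (+) (B && (p (+) q))
          = (A && B) (+) ((A (+) B) && (p (+) q)) by case: A; case: B; case: p; case: q.
  exact: sim_mod_swap.
subst m; have S := sim_mod_anti k (ltnW hr) ab1 odd1.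
split.
  have -> : (-1 : k) = sgn k true by rewrite /sgn expr1.
  by apply: gdn_sim_of_sim_mod; rewrite ?rootMM ?tlenMM.
have [s Hs Z] := sim_mod_opp_self hchar S.
exists s; split=> //.
have -> : (tlen mu + tlen nu)%N = (r.+1 + r)%N by exact: tlenMM.
by rewrite /mu /nu !root_num_rnorm //; lia.
Qed.
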